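(* Let $t_1$ and $t$ be the terms $t_1(x,y):=(x\wedge y)\vee(x\vee y)'$ and $t(x,y,z):=\Bigg(\bigg(\Big(\big((x\vee y)\wedge z\big)'\vee x\Big)\wedge(x\vee y)\bigg)'\vee x\Bigg)\wedge\Big(\big((x\vee y)\wedge z\big)'\vee y\Big)\wedge(x\vee y)$. Then the ideal terms $t_1\big(t(x_1,x_2,y_1)\vee t(x_3,x_4,y_2),\,x_2\vee x_4\big)$ (in $y_1,y_2$), $t_1\big(t(x_1,x_2,y_1)\wedge t(x_3,x_4,y_2),\,x_2\wedge x_4\big)$ (in $y_1,y_2$), $t_1\big((t(x_1,x_2,y))',\,x_2'\big)$ (in $y$), and the constant $1$ form a basis of ideal terms of $\mathcal V$: for every $\mathbf L\in\mathcal V$, a subset $I\subseteq L$ is an ideal of $\mathbf L$ if and only if $1\in I$ and $I$ is closed under each of the three listed ideal terms.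
   Context: $\mathcal V$ is the variety of algebras $(L,\vee,\wedge,{}',0,1)$ that are bounded lattices with a complementation $'$ (i.e. $x\vee x'\approx1$, $x\wedge x'\approx0$) satisfying the identities $x\vee y'\approx y'\vee\big((x\vee y')\wedge y\big)$ and $x\wedge y\approx x\wedge\big((x\wedge y)\vee x'\big)$. An ideal term in $y_1,\dots,y_m$ is a term $s(x_1,\dots,x_n,y_1,\dots,y_m)$ such that $\mathcal V$ satisfies $s(x_1,\dots,x_n,1,\dots,1)\approx1$. A subset $I\subseteq L$ is closed under such $s$ if $s(a_1,\dots,a_n,b_1,\dots,b_m)\in I$ for all $a_1,\dots,a_n\in L$ and $b_1,\dots,b_m\in I$. An ideal of $\mathbf L$ is a subset closed under all ideal terms (for the constant $1$, closedness means $1\in I$). A set $T$ of ideal terms is a basis of ideal terms if, for every $\mathbf L\in\mathcal V$, a subset of $L$ is an ideal iff it is closed under all terms of $T$. (These notions of ''ideal'' are not lattice ideals.) *)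

From mathcomp Require Import all_boot.

Set Implicit Arguments.
Unset Strict Implicit.
Unset Printing Implicit Defensive.

Record VAlg := {
  carrier :> Type;
  vjoin : carrier -> carrier -> carrier;
  vmeet : carrier -> carrier -> carrier;
  vcomp : carrier -> carrier;
  vzero : carrier;
  vone : carrier;
  joinC : forall x y, vjoin x y = vjoin y x;
  joinA : forall x y z, vjoin x (vjoin y z) = vjoin (vjoin x y) z;
  meetC : forall x y, vmeet x y = vmeet y x;
  meetA : forall x y z, vmeet x (vmeet y z) = vmeet (vmeet x y) z;
  joinKmeet : forall x y, vjoin x (vmeet x y) = x;
  meetKjoin : forall x y, vmeet x (vjoin x y) = x;
  join0 : forall x, vjoin x vzero = x;
  meet1 : forall x, vmeet x vone = x;
  join_comp : forall x, vjoin x (vcomp x) = vone;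
  meet_comp : forall x, vmeet x (vcomp x) = vzero;
  identity1 : forall x y,
    vjoin x (vcomp y) = vjoin (vcomp y) (vmeet (vjoin x (vcomp y)) y);
  identity2 : forall x y,
    vmeet x y = vmeet x (vjoin (vmeet x y) (vcomp x))
}.

Inductive term (V : Type) : Type :=
  | Var : V -> term V
  | TJoin : term V -> term V -> term V
  | TMeet : term V -> term V -> term V
  | TComp : term V -> term V
  | TZero : term V
  | TOne : term V.
Arguments TZero {V}.
Arguments TOne {V}.

Fixpoint eval (L : VAlg) (V : Type) (e : V -> L) (s : term V) : L :=
  match s with
  | Var v => e v
  | TJoin a b => vjoin (eval e a) (eval e b)
  | TMeet a b => vmeet (eval e a) (eval e b)
  | TComp a => vcomp (eval e a)
  | TZero => vzero L
  | TOne => vone L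
  end.

(* Assignment of x_1..x_n (inl) and y_1..y_m (inr). *)
Definition asg (L : VAlg) (n m : nat) (a : 'I_n -> L) (b : 'I_m -> L)
  (v : 'I_n + 'I_m) : L :=
  match v with inl i => a i | inr j => b j end.

Definition ideal_term (n m : nat) (s : term ('I_n + 'I_m)) : Prop :=
  forall (L : VAlg) (a : 'I_n -> L),
    eval (asg a (fun _ => vone L)) s = vone L.

Definition closed_under (L : VAlg) (I : L -> Prop) (n m : nat)
  (s : term ('I_n + 'I_m)) : Prop :=
  forall (a : 'I_n -> L) (b : 'I_m -> L),
    (forall j, I (b j)) -> I (eval (asg a b) s).

Definition is_ideal (L : VAlg) (I : L -> Prop) : Prop :=
  forall (n m : nat) (s : term ('I_n + 'I_m)),
    ideal_term s -> closed_under I s.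

Definition t1 (V : Type) (x y : term V) : term V :=
  TJoin (TMeet x y) (TComp (TJoin x y)).

Definition t (V : Type) (x y z : term V) : term V :=
  let xy := TJoin x y in
  let u := TComp (TMeet xy z) in
  TMeet (TMeet (TJoin (TComp (TMeet (TJoin u x) xy)) x) (TJoin u y)) xy.

Definition X4 (i : 'I_4) : term ('I_4 + 'I_2) := Var (inl i).
Definition Y2 (j : 'I_2) : term ('I_4 + 'I_2) := Var (inr j).
Definition o4_0 : 'I_4 := @Ordinal 4 0 isT.
Definition o4_1 : 'I_4 := @Ordinal 4 1 isT.
Definition o4_2 : 'I_4 := @Ordinal 4 2 isT.
Definition o4_3 : 'I_4 := @Ordinal 4 3 isT.
Definition o2_0 : 'I_2 := @Ordinal 2 0 isT.
Definition o2_1 : 'I_2 := @Ordinal 2 1 isT.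
Definition o1_0 : 'I_1 := @Ordinal 1 0 isT.

Definition basis_term1 : term ('I_4 + 'I_2) :=
  t1 (TJoin (t (X4 o4_0) (X4 o4_1) (Y2 o2_0)) (t (X4 o4_2) (X4 o4_3) (Y2 o2_1)))
     (TJoin (X4 o4_1) (X4 o4_3)).

Definition basis_term2 : term ('I_4 + 'I_2) :=
  t1 (TMeet (t (X4 o4_0) (X4 o4_1) (Y2 o2_0)) (t (X4 o4_2) (X4 o4_3) (Y2 o2_1)))
     (TMeet (X4 o4_1) (X4 o4_3)).

Definition basis_term3 : term ('I_2 + 'I_1) :=
  t1 (TComp (t (Var (inl o2_0)) (Var (inl o2_1)) (Var (inr o1_0))))
     (TComp (Var (inl o2_1))).

Definition basis_term0 : term ('I_0 + 'I_0) := TOne.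

From mathcomp Require Import all_boot.

Set Implicit Arguments.
Unset Strict Implicit.
Unset Printing Implicit Defensive.

(* With t1(x,y) = (x ^ y) v (x v y)', the term t satisfies t(x,y,1) = y and
   t(x,y,t1(x,y)) = x, while t1(x,x) = 1 and t1(x,1) = x.  So if b ranges over
   I, induction on any term s shows t1(s(a,b), s(a,1)) in I: at an operation,
   feed the matching basis term the values of the immediate subterms at b and
   at 1 as the x's, and their t1's (in I by induction) as the y's; every t
   collapses and what remains is t1(s(a,b), s(a,1)).  For an ideal term
   s(a,1) = 1, so this element is s(a,b) itself. *)

Section Identities.
Variable L : VAlg.
Local Notation "x \v y" := (vjoin x y) (at level 50, left associativity).
Local Notation "x \m y" := (vmeet x y) (at level 40, left associativity).
Local Notation "x ^c" := (vcomp x) (at level 2).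
Local Notation "x <=v y" := (x \m y = x) (at level 70).
Local Notation one := (vone L).
Local Notation zero := (vzero L).

Definition t1S (x y : L) : L := (x \m y) \v (x \v y)^c.
Definition tS (x y z : L) : L :=
  let b := x \v y in let u := (b \m z)^c in
  ((((u \v x) \m b)^c \v x) \m (u \v y)) \m b.

Lemma meetxx (x : L) : x \m x = x.
Proof. by rewrite -{2}(joinKmeet x x) meetKjoin. Qed.

Lemma joinxx (x : L) : x \v x = x.
Proof. by rewrite -{2}(meetKjoin x x) joinKmeet. Qed.

Lemma meet1l (x : L) : one \m x = x.
Proof. by rewrite meetC meet1. Qed.

Lemma join1r (x : L) : x \v one = one.
Proof. by rewrite -{1}(join_comp x) joinA joinxx join_comp. Qed.

Lemma comp1 : one^c = zero.
Proof. by rewrite -(meet_comp one) meet1l. Qed.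

Lemma le_join_eq (a b : L) : a <=v b -> a \v b = b.
Proof. by move=> ab; rewrite -{1}ab joinC meetC joinKmeet. Qed.

Lemma join_eq_le (a b : L) : a \v b = b -> a <=v b.
Proof. by move=> ab; rewrite -ab meetKjoin. Qed.

Lemma le_trans (a b c : L) : a <=v b -> b <=v c -> a <=v c.
Proof. by move=> ab bc; rewrite -ab -meetA bc. Qed.

Lemma meet_lel (x y : L) : x \m y <=v x.
Proof. by rewrite meetC meetA meetxx. Qed.

Lemma meet_ler (x y : L) : x \m y <=v y.
Proof. by rewrite -meetA meetxx. Qed.

Lemma le_joinl (x y : L) : x <=v x \v y.
Proof. exact: meetKjoin. Qed.

Lemma le_joinr (x y : L) : y <=v x \v y.
Proof. by rewrite joinC meetKjoin. Qed.

Lemma orthomodular (p x : L) : p <=v x -> x \m (p \v x^c) = p.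
Proof. by move=> px; have := identity2 x p; rewrite meetC px => <-. Qed.

Lemma orthomodular_dual (y r : L) : y^c \v r = r -> r = y^c \v (r \m y).
Proof. by move=> yr; have := identity1 r y; rewrite joinC yr. Qed.

Lemma join_comp_le (p x : L) : p <=v x -> p^c \v x = one.
Proof.
move=> px.
have E : p^c \v x = p^c \v ((p^c \v x) \m p).
  by apply: orthomodular_dual; rewrite joinA joinxx.
have px' : p \v (p^c \v x) = p^c \v x.
  by rewrite joinA (joinC p) -joinA (le_join_eq px).
by rewrite meetC (join_eq_le px') in E; rewrite E joinC join_comp.
Qed.

Lemma tS_one (x y : L) : tS x y one = y.
Proof.
rewrite /tS meet1.
have -> : ((x \v y)^c \v x) \m (x \v y) = x.
  by rewrite meetC (joinC (vcomp _) x) orthomodular ?le_joinl.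
by rewrite (joinC (vcomp x) x) join_comp meet1l meetC (joinC (vcomp _) y)
  orthomodular ?le_joinr.
Qed.

Lemma tS_t1S (x y : L) : tS x y (t1S x y) = x.
Proof.
rewrite /tS /t1S orthomodular; last exact: le_trans (meet_lel x y) (le_joinl x y).
rewrite (join_comp_le (meet_lel x y)) (join_comp_le (meet_ler x y)).
by rewrite meet1l meet1 meetC (joinC (vcomp _) x) orthomodular ?le_joinl.
Qed.

Lemma t1Sxx (x : L) : t1S x x = one.
Proof. by rewrite /t1S meetxx joinxx join_comp. Qed.

Lemma t1S_one (x : L) : t1S x one = x.
Proof. by rewrite /t1S meet1 join1r comp1 join0. Qed.

End Identities.

Lemma eval_basis_term1 (L : VAlg) (e : 'I_4 + 'I_2 -> L) :
  eval e basis_term1 =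
  t1S (vjoin (tS (e (inl o4_0)) (e (inl o4_1)) (e (inr o2_0)))
             (tS (e (inl o4_2)) (e (inl o4_3)) (e (inr o2_1))))
      (vjoin (e (inl o4_1)) (e (inl o4_3))).
Proof. by []. Qed.

Lemma eval_basis_term2 (L : VAlg) (e : 'I_4 + 'I_2 -> L) :
  eval e basis_term2 =
  t1S (vmeet (tS (e (inl o4_0)) (e (inl o4_1)) (e (inr o2_0)))
             (tS (e (inl o4_2)) (e (inl o4_3)) (e (inr o2_1))))
      (vmeet (e (inl o4_1)) (e (inl o4_3))).
Proof. by []. Qed.

Lemma eval_basis_term3 (L : VAlg) (e : 'I_2 + 'I_1 -> L) :
  eval e basis_term3 =
  t1S (vcomp (tS (e (inl o2_0)) (e (inl o2_1)) (e (inr o1_0))))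
      (vcomp (e (inl o2_1))).
Proof. by []. Qed.

Lemma basis_term0_ideal : ideal_term basis_term0.
Proof. by []. Qed.

Lemma basis_term1_ideal : ideal_term basis_term1.
Proof. by move=> L a; rewrite eval_basis_term1 /= !tS_one t1Sxx. Qed.

Lemma basis_term2_ideal : ideal_term basis_term2.
Proof. by move=> L a; rewrite eval_basis_term2 /= !tS_one t1Sxx. Qed.

Lemma basis_term3_ideal : ideal_term basis_term3.
Proof. by move=> L a; rewrite eval_basis_term3 /= !tS_one t1Sxx. Qed.

Section ClosedUnderBasis.
Variables (L : VAlg) (I : L -> Prop).
Hypotheses (I0 : closed_under I basis_term0) (I1 : closed_under I basis_term1)
  (I2 : closed_under I basis_term2) (I3 : closed_under I basis_term3).

Lemma closed_basis_one : I (vone L).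
Proof. by have := @I0 (fun _ => vone L) (fun _ => vone L); apply=> -[]. Qed.

Lemma closed_basis_t1S_join (c d c' d' : L) :
  I (t1S c d) -> I (t1S c' d') -> I (t1S (vjoin c c') (vjoin d d')).
Proof.
move=> Icd Icd'.
have := @I1 (fun k => nth c [:: c; d; c'; d'] k)
           (fun j => nth c [:: t1S c d; t1S c' d'] j).
by rewrite eval_basis_term1 /= !tS_t1S; apply; case=> [[|[|]]].
Qed.

Lemma closed_basis_t1S_meet (c d c' d' : L) :
  I (t1S c d) -> I (t1S c' d') -> I (t1S (vmeet c c') (vmeet d d')).
Proof.
move=> Icd Icd'.
have := @I2 (fun k => nth c [:: c; d; c'; d'] k)
           (fun j => nth c [:: t1S c d; t1S c' d'] j).
by rewrite eval_basis_term2 /= !tS_t1S; apply; case=> [[|[|]]].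
Qed.

Lemma closed_basis_t1S_comp (c d : L) :
  I (t1S c d) -> I (t1S (vcomp c) (vcomp d)).
Proof.
move=> Icd.
have := @I3 (fun k => nth c [:: c; d] k) (fun _ => t1S c d).
by rewrite eval_basis_term3 /= !tS_t1S; apply.
Qed.

Lemma closed_basis_t1S_eval (n m : nat) (a : 'I_n -> L) (b : 'I_m -> L)
    (s : term ('I_n + 'I_m)) :
  (forall j, I (b j)) ->
  I (t1S (eval (asg a b) s) (eval (asg a (fun _ => vone L)) s)).
Proof.
move=> Ib; elim: s => [[i|j]|s1 IH1 s2 IH2|s1 IH1 s2 IH2|s IH||] /=.
- by rewrite t1Sxx; apply: closed_basis_one.
- by rewrite t1S_one.
- exact: closed_basis_t1S_join.
- exact: closed_basis_t1S_meet.
- exact: closed_basis_t1S_comp.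
- by rewrite t1Sxx; apply: closed_basis_one.
- by rewrite t1Sxx; apply: closed_basis_one.
Qed.

Lemma closed_basis_is_ideal : is_ideal I.
Proof.
move=> n m s s_ideal a b Ib.
by have := closed_basis_t1S_eval a s Ib; rewrite s_ideal t1S_one.
Qed.

End ClosedUnderBasis.

Theorem theorem3 :
  ideal_term basis_term0 /\ ideal_term basis_term1 /\
  ideal_term basis_term2 /\ ideal_term basis_term3 /\
  forall (L : VAlg) (I : L -> Prop),
    is_ideal I <->
    (closed_under I basis_term0 /\ closed_under I basis_term1 /\
     closed_under I basis_term2 /\ closed_under I basis_term3).
Proof.
split; first exact: basis_term0_ideal.
split; first exact: basis_term1_ideal.
split; first exact: basis_term2_ideal.
split; first exact: basis_term3_ideal.
move=> L I; split.
- move=> I_ideal; split; first exact: I_ideal basis_term0_ideal.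
  split; first exact: I_ideal basis_term1_ideal.
  split; first exact: I_ideal basis_term2_ideal.
  exact: I_ideal basis_term3_ideal.
- by case=> I0 [I1 [I2 I3]]; apply: closed_basis_is_ideal.
Qed.
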